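(* Let $f$ be a continuous map on a compact metric space $\mathbf{M}$, and let $(U_n)$ be a nested sequence of subsets ($U_{n+1}\subset U_n$, not necessarily open) such that $\bigcap_nU_n=\bigcap_n\overline{U_n}=:\Lambda$. Then $\pi(U_n)\to\infty$ if and only if $\Lambda$ contains no periodic point and $\Lambda$ is contained in a fundamental domain of $f$, i.e., $\Lambda$ intersects every orbit at most once.
   Context: For $U\subset\mathbf{M}$, the period of $U$ is $\pi(U)=\min\{k>0:f^{-k}U\cap U\neq\emptyset\}$ (with $\pi(U)=\infty$ if no such $k$ exists). The orbit of $x$ is $\{f^k(x):k\ge0\}$. *)

From HB Require Import structures.
From mathcomp Require Import all_boot all_order all_algebra.
From mathcomp Require Import all_classical all_reals all_analysis.
Set Implicit Arguments. Unset Strict Implicit. Unset Printing Implicit Defensive.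
Import Order.TTheory GRing.Theory Num.Theory.
Local Open Scope classical_set_scope.
Local Open Scope ring_scope.

(* period of U under f: pi(U) = min {k > 0 : f^{-k} U `&` U <> set0},
   valued in the extended reals so that min of the empty set is +oo. *)
Definition period (R : realType) (T : Type) (f : T -> T) (U : set T) : \bar R :=
  ereal_inf [set (k%:R)%:E | k in
     [set k : nat | (0 < k)%N /\ (iter k f @^-1` U) `&` U !=set0]].

Definition orbit (T : Type) (f : T -> T) (x : T) : set T :=
  [set iter k f x | k in [set: nat]].

Definition periodic_point (T : Type) (f : T -> T) (x : T) : Prop :=
  exists k : nat, (0 < k)%N /\ iter k f x = x.

Definition in_fundamental_domain (T : Type) (f : T -> T) (L : set T) : Prop :=
  forall x y z, L y -> orbit f x y -> L z -> orbit f x z -> y = z.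

From HB Require Import structures.
From mathcomp Require Import all_boot all_order all_algebra.
From mathcomp Require Import all_classical all_reals all_analysis.
Set Implicit Arguments. Unset Strict Implicit. Unset Printing Implicit Defensive.
Import Order.TTheory GRing.Theory Num.Theory.
Local Open Scope classical_set_scope.
Local Open Scope ring_scope.

(* Both conditions on [Λ] together say exactly that no point of [Λ] returns to
   [Λ] at a positive time.  A return of [Λ] at time [k] is a return of every
   [U n ⊇ Λ], so [π(U n) <= k] for all [n]: periods tending to infinity forbid
   returns to [Λ].  Conversely, if the periods stay bounded, some fixed time [k]
   is a return time of every [U n] (finitely many candidate times, and the [U n]
   are nested); by compactness, a cluster point [p] of points [x n ∈ U n] with
   [f^k (x n) ∈ U n] lies, together with [f^k p], in every [closure (U n)],
   that is in [Λ]. *)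

Section Returns.
Variables (T : Type) (f : T -> T).

Definition returns_at (k : nat) (A : set T) : Prop :=
  (iter k f @^-1` A) `&` A !=set0.

Lemma returns_at_sub k A B : A `<=` B -> returns_at k A -> returns_at k B.
Proof. by move=> AB [x [Akx Ax]]; exists x; split; apply: AB. Qed.

Lemma aperiodic_fundamental_domainP (L : set T) :
  ((forall x, L x -> ~ periodic_point f x) /\ in_fundamental_domain f L) <->
  (forall k, (0 < k)%N -> ~ returns_at k L).
Proof.
split=> [[aper fd] k k0 [y [Lky Ly]]|noret].
  apply: (aper y Ly); exists k; split=> //.
  by apply/esym/(fd y y (iter k f y)) => //; [exists 0%N|exists k].
split=> [x Lx [k [k0 kx]]|x y z Ly [a _ ya] Lz [b _ zb]].
  by apply: (noret k k0); exists x; rewrite /= kx.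
subst y z.
have return_later m n : (m < n)%N -> L (iter m f x) -> ~ L (iter n f x).
  move=> mn Lm Ln; apply: (noret (n - m)%N); first by rewrite subn_gt0.
  by exists (iter m f x); rewrite /= -iterD subnK // ltnW.
by case: (ltngtP a b) => [ab|ba|-> //]; exfalso;
  [exact: (return_later a b)|exact: (return_later b a)].
Qed.

End Returns.

Section Period.
Variables (R : realType) (T : Type) (f : T -> T).

Lemma period_le_returns k A :
  (0 < k)%N -> returns_at f k A -> (period R f A <= (k%:R)%:E)%E.
Proof. by move=> k0 ret; apply: ereal_inf_lbound; exists k. Qed.

Lemma period_le_sub A B : A `<=` B -> (period R f B <= period R f A)%E.
Proof.
move=> AB; apply: ereal_inf_le_tmp => _ [k [k0 ret] <-].
by exists k => //; split=> //; apply: returns_at_sub AB ret.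
Qed.

Lemma period_lt_returns A (N : nat) : (period R f A < (N%:R)%:E)%E ->
  exists2 k, (0 < k < N)%N & returns_at f k A.
Proof.
move=> /ereal_inf_lt[_ [k [k0 ret] <-]]; rewrite lte_fin ltr_nat => kN.
by exists k; rewrite ?k0.
Qed.

End Period.

Section Nested.
Variables (T : Type) (U : nat -> set T).
Hypothesis U_nested : forall n, U n.+1 `<=` U n.

Lemma nested_le m n : (m <= n)%N -> U n `<=` U m.
Proof.
apply: (homo_leq (r := fun A B => B `<=` A)) => [A|B A C BA CB|//].
  exact: subset_refl.
exact: subset_trans CB BA.
Qed.

(* The times [k < N] that fail for some [U n] all fail for [U m] with [m] the
   largest such [n]. *)
Lemma nested_common_return (g : T -> T) (N : nat) :
  (forall n, exists2 k, (0 < k < N)%N & returns_at g k (U n)) ->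
  exists2 k, (0 < k)%N & forall n, returns_at g k (U n).
Proof.
move=> bounded; apply: contrapT => noret.
have escape k : exists n, ~ returns_at g k.+1 (U n).
  by apply/existsNP => ret; apply: noret; exists k.+1.
have [n_ hn_] := choice escape.
have [[|k] // /andP[_ kN] ret] := bounded (\max_(i < N) n_ i)%N.
apply: (hn_ k); apply: returns_at_sub _ ret; apply: nested_le.
exact: (leq_bigmax (Ordinal (ltnW kN))).
Qed.

End Nested.

Lemma continuous_iter (T : topologicalType) (f : T -> T) k :
  continuous f -> continuous (iter k f).
Proof.
move=> fC; elim: k => [|k IH] x /=; first exact: cvg_id.
exact: continuous_comp (IH x) (fC _).
Qed.

Lemma closure_preimage_continuous (S T : topologicalType) (g : S -> T) A :
  continuous g -> closure (g @^-1` A) `<=` g @^-1` closure A.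
Proof. by move=> gC p clp B /gC /clp[y [Ay By]]; exists (g y). Qed.

Lemma compact_returns_at_bigcap_closure (T : topologicalType) (f : T -> T)
    (U : nat -> set T) k :
  compact [set: T] -> continuous f -> (forall n, U n.+1 `<=` U n) ->
  (forall n, returns_at f k (U n)) -> returns_at f k (\bigcap_n closure (U n)).
Proof.
move=> cT fC nested ret; have [x_ hx_] := choice ret.
have [p [_]] := cT (x_ @ \oo) _ filterT; rewrite clusterE => clp.
have cl_returns n : closure (iter k f @^-1` U n `&` U n) p.
  apply: clp; exists n => // m /(nested_le nested) Unm.
  by case: (hx_ m); split; apply: Unm.
exists p; split=> n _.
  have cl_pre : closure (iter k f @^-1` U n) p.
    by apply: closureS (cl_returns n) => x [].
  exact: (closure_preimage_continuous (continuous_iter fC) cl_pre).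
by apply: closureS (cl_returns n) => x [].
Qed.

Theorem proposition6p2 (R : realType) (M : metricType R) (f : M -> M)
  (U : nat -> set M) :
  compact [set: M] ->
  continuous f ->
  (forall n, U n.+1 `<=` U n) ->
  \bigcap_n U n = \bigcap_n closure (U n) ->
  ((fun n => period R f (U n)) @ \oo --> +oo%E) <->
  ((forall x, (\bigcap_n U n) x -> ~ periodic_point f x) /\
   in_fundamental_domain f (\bigcap_n U n)).
Proof.
move=> cM fC nested closedL; rewrite aperiodic_fundamental_domainP; split.
  move=> period_cvg k k0 retL.
  have [N _ /(_ N (leqnn N))] := cvgey_gt period_cvg k%:R.
  rewrite /= ltNge (period_le_returns R k0) //.
  by apply: returns_at_sub _ retL; apply: bigcap_inf.
move=> noret; apply/cvgeyPgt => A.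
have [[n0 An0]|never_above] := pselect (exists n0, (A%:E < period R f (U n0))%E).
  near=> n; apply: (lt_le_trans An0); apply/period_le_sub/(nested_le nested).
  by near: n; apply: nbhs_infty_ge.
have bounded n : (period R f (U n) <= A%:E)%E.
  by rewrite leNgt; apply/negP => An; apply: never_above; exists n.
exfalso; have [k k0 ret] : exists2 k, (0 < k)%N & forall n, returns_at f k (U n).
  apply: (@nested_common_return _ _ nested _ (Num.Def.truncn A).+1) => n.
  by apply/period_lt_returns/(le_lt_trans (bounded n)); rewrite lte_fin truncnS_gt.
by apply: (noret k k0); rewrite closedL; apply: compact_returns_at_bigcap_closure.
Unshelve. all: by end_near.
Qed.
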